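(* Let $\mathbf A=(\mathbf a_1,\ldots,\mathbf a_m)^\top\in\mathbb R^{m\times d}$ and $\mathbf b\in\mathbb R^m$. If $m\le 2d-1$, then $(\mathbf A,\mathbf b)$ is not affine phase retrievable for $\mathbb R^d$.
   Context: $(\mathbf A,\mathbf b)$ is called affine phase retrievable for $\mathbb R^d$ if the map $\mathbf x\mapsto(|\langle\mathbf a_1,\mathbf x\rangle+b_1|,\ldots,|\langle\mathbf a_m,\mathbf x\rangle+b_m|)$ is injective on $\mathbb R^d$, where $\mathbf b=(b_1,\ldots,b_m)^\top$. *)

From mathcomp Require Import all_boot all_order all_algebra.
Set Implicit Arguments. Unset Strict Implicit. Unset Printing Implicit Defensive.
Import Order.TTheory GRing.Theory Num.Theory.
Local Open Scope ring_scope.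

Definition affine_phase_map (R : numDomainType) (m d : nat)
  (A : 'M[R]_(m, d)) (b : 'cV[R]_m) (x : 'cV[R]_d) : 'cV[R]_m :=
  \col_i `|(A *m x) i 0 + b i 0|.

Definition affine_phase_retrievable (R : numDomainType) (m d : nat)
  (A : 'M[R]_(m, d)) (b : 'cV[R]_m) : Prop :=
  injective (affine_phase_map A b).

(* Choose r = rank A linearly independent rows of A and let C be the
   remaining m - r rows.  Any right-hand side can be matched on the
   independent rows by some w, and since rank C <= min(r, m - r) < d there
   is a nonzero u with C u = 0.  On every row either <a_i, w> + b_i = 0 or
   <a_i, u> = 0, so w + u and w - u have the same affine phase measurements. *)
From mathcomp Require Import all_boot all_order all_algebra.
From mathcomp Require Import reals.
From mathcomp Require Import zify.
Set Implicit Arguments. Unset Strict Implicit. Unset Printing Implicit Defensive.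
Import Order.TTheory GRing.Theory Num.Theory.
Local Open Scope ring_scope.

Section RowSplit.
Variable F : fieldType.

Lemma row_free_solvable n d (B : 'M[F]_(n, d)) (c : 'cV_n) :
  row_free B -> exists w, B *m w = c.
Proof.
by case/row_freeP=> B' BB'; exists (B' *m c); rewrite mulmxA BB' mul1mx.
Qed.

Lemma mxrank_lt_ker_neq0 n d (C : 'M[F]_(n, d)) :
  (\rank C < d)%N -> exists2 u : 'cV_d, u != 0 & C *m u = 0.
Proof.
move=> rkC; have : kermx C^T != 0.
  by rewrite -mxrank_eq0 mxrank_ker mxrank_tr subn_eq0 -ltnNge.
case/rowV0Pn=> v /sub_kermxP vC v0; exists v^T.
  by rewrite -(inj_eq (@trmx_inj _ _ _)) trmxK trmx0.
by rewrite -[C]trmxK -trmx_mul vC trmx0.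
Qed.

Lemma exists_rowwise_solution_kernel m d (A : 'M[F]_(m, d)) (y : 'cV_m) :
  (m < 2 * d)%N ->
  exists w u : 'cV_d,
    u != 0 /\ forall i, (A *m w) i 0 = y i 0 \/ (A *m u) i 0 = 0.
Proof.
move=> md; pose f := maxrankfun A.
have [w Aw] := row_free_solvable (rowsub f y) (maxrowsub_free A).
pose S := [predC codom f].
pose C := rowsub (enum_val : 'I_#|S| -> 'I_m) A.
have cardS : (\rank A + #|S|)%N = m.
  rewrite -[in LHS](card_ord (\rank A)) -(card_codom (@maxrankfun_inj _ _ _ A)).
  by rewrite cardC card_ord.
have rkC : (\rank C < d)%N.
  have : (\rank C <= \rank A)%N by exact/mxrankS/rowsub_sub.
  have := rank_leq_row C; lia.
have [u u0 Cu] := mxrank_lt_ker_neq0 rkC.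
exists w, u; split=> // i.
have [iS|] := boolP (i \in S).
  right; have /matrixP/(_ (enum_rank_in iS i) 0) := Cu.
  by rewrite mul_rowsub_mx !mxE enum_rankK_in.
rewrite inE negbK => /codomP[k ->]; left.
by have /matrixP/(_ k 0) := Aw; rewrite mul_rowsub_mx !mxE.
Qed.

End RowSplit.

Lemma affine_phase_map_reflect (R : numDomainType) m d
    (A : 'M[R]_(m, d)) (b : 'cV_m) (w u : 'cV_d) :
  (forall i, (A *m w) i 0 = - b i 0 \/ (A *m u) i 0 = 0) ->
  affine_phase_map A b (w + u) = affine_phase_map A b (w - u).
Proof.
move=> wu; apply/matrixP=> i j; rewrite /affine_phase_map !mulmxDr mulmxN.
move: (A *m w) (A *m u) wu => p q /(_ i) wu; rewrite !mxE.
case: wu => ->; last by rewrite oppr0 addr0.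
by rewrite addrAC addNr add0r addrAC addNr add0r normrN.
Qed.

Theorem theorem2p2 (R : realType) (m d : nat)
  (A : 'M[R]_(m, d)) (b : 'cV[R]_m) :
  (m < 2 * d)%N -> ~ affine_phase_retrievable A b.
Proof.
move=> md inj.
have [w [u [u0 wu]]] := exists_rowwise_solution_kernel A (- b) md.
have /inj/eqP : affine_phase_map A b (w + u) = affine_phase_map A b (w - u).
  apply: affine_phase_map_reflect => i.
  by have := wu i; rewrite [X in _ = X \/ _]mxE.
rewrite (inj_eq (addrI w)) -subr_eq0 opprK -mulr2n -scaler_nat.
by rewrite scalemx_eq0 pnatr_eq0 (negPf u0).
Qed.
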